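(* Let $a,b,k$ be positive integers with $\gcd(a,b)=1$. Define $a_1=a$, $a_2=b$, and $a_n=ka_{n-1}+a_{n-2}$ for $n\ge 3$. Let $(x_n)_{n\ge1}$ be the sequence $1,1,1,2,2,2,1,1,1,2,2,2,\ldots$ and $(y_n)_{n\ge1}$ the sequence $2,2,2,1,1,1,2,2,2,1,1,1,\ldots$ (blocks of three, alternating). (1) If $k$ is even, then the sequence $(\Gamma(a_n,a_{n+1}))_{n\ge1}$ is constant. (2) If $k$ is odd: (a) if $a$ and $b$ are both odd, then $(\Gamma(a_n,a_{n+1}))_{n\ge 3}$ equals $(x_n)_{n\ge1}$ or $(y_n)_{n\ge1}$; (b) if $a$ is odd and $b$ is even, then $(\Gamma(a_n,a_{n+1}))_{n\ge 2}$ equals $(x_n)_{n\ge1}$ or $(y_n)_{n\ge1}$; (c) if $a$ is even and $b$ is odd, then $(\Gamma(a_n,a_{n+1}))_{n\ge 1}$ equals $(x_n)_{n\ge1}$ or $(y_n)_{n\ge1}$.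
   Context: For relatively prime positive integers $p,q$, exactly one of the equations $px+qy=\frac{(p-1)(q-1)}{2}$ (Equation 1) and $px+qy+1=\frac{(p-1)(q-1)}{2}$ (Equation 2) has a solution in nonnegative integers $(x,y)$. For positive integers $a,b$ with $d=\gcd(a,b)$, $\Gamma(a,b)=1$ if Equation 1 with $(p,q)=(a/d,b/d)$ has a nonnegative integer solution, and $\Gamma(a,b)=2$ otherwise. A sequence indexed from $n\ge m$ ''equals'' $(x_n)_{n\ge1}$ means its $j$-th term (the one with index $n=m+j-1$) equals $x_j$ for all $j\ge1$. *)

From Stdlib Require Import ClassicalEpsilon.
From mathcomp Require Import all_boot.
Set Implicit Arguments. Unset Strict Implicit. Unset Printing Implicit Defensive.

(* Equation 1 for (p,q): p x + q y = (p-1)(q-1)/2 has a solution in nonnegative integers.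
   (For coprime p,q the product (p-1)(q-1) is even, so %/2 is exact.) *)
Definition eq1_solvable (p q : nat) : Prop :=
  exists x y : nat, p * x + q * y = ((p - 1) * (q - 1)) %/ 2.

Definition Gamma (a b : nat) : nat :=
  let d := gcdn a b in
  if excluded_middle_informative (eq1_solvable (a %/ d) (b %/ d)) then 1 else 2.

(* rec k a b n = a_{n+1}, where a_1 = a, a_2 = b, a_n = k a_{n-1} + a_{n-2}. *)
Fixpoint rec_pair (k a b : nat) (n : nat) : nat * nat :=
  match n with
  | 0 => (a, b)
  | n'.+1 => let (u, v) := rec_pair k a b n' in (v, k * v + u)
  end.

(* aseq k a b n = a_n for n >= 1 (1-indexed; aseq k a b 0 is a dummy equal to a_1). *)
Definition aseq (k a b : nat) (n : nat) : nat := (rec_pair k a b n.-1).1.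

Definition xseq (j : nat) : nat := if odd ((j - 1) %/ 3) then 2 else 1.
Definition yseq (j : nat) : nat := if odd ((j - 1) %/ 3) then 1 else 2.

Definition gseq_from (k a b m : nat) (s : nat -> nat) : Prop :=
  forall j, 1 <= j -> Gamma (aseq k a b (m + j - 1)) (aseq k a b (m + j)) = s j.

From mathcomp Require Import all_boot zify.
From Stdlib Require Import ClassicalEpsilon.

(* Write q = a_n and p = a_(n-1): passing to (a_n, a_(n+1)) = (q, p + k q) adds q to
   the second argument k times.  Adding an odd q = 2s+1 preserves the solvability of
   Equation 1, since (x, y) |-> (x + s - y, y) matches the solutions; adding an even q
   negates it.  So Gamma(a_n, a_(n+1)) flips exactly when k is odd and a_n is even.  For
   even k it never flips; for odd k the parity pattern of (a_n) is 3-periodic with one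
   even term per period, so Gamma flips every third step. *)

Lemma eq1_solvable_sym p q : eq1_solvable p q <-> eq1_solvable q p.
Proof. by split=> -[x [y E]]; exists y, x; rewrite addnC E mulnC. Qed.

Lemma eq1_solvable_half p q c : (p - 1) * (q - 1) = c * 2 ->
  eq1_solvable p q <-> exists x y, p * x + q * y = c.
Proof. by move=> pq; rewrite /eq1_solvable pq mulnK. Qed.

Lemma eq1_solvable_addr_odd m r : odd m -> 0 < r ->
  eq1_solvable m (r + m) <-> eq1_solvable m r.
Proof.
move=> om r0; have [s ->] : exists s, m = 2 * s + 1 by exists m./2; lia.
rewrite (@eq1_solvable_half _ _ (s * (r + 2 * s))); last by nia.
rewrite (@eq1_solvable_half _ _ (s * (r - 1))); last by nia.
split=> -[x [y E]].
- have : s <= x + y by nia.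
  by exists (x + y - s), y; nia.
- have : y <= s by nia.
  by exists (x + s - y), y; nia.
Qed.

Lemma coprime_linear_congruence p q c : 0 < p -> coprime p q ->
  exists2 y, y < p & p %| q * y + c.
Proof.
move=> p0 co; have [a _] := Bezoutl q p0; rewrite (eqP co) => dv.
exists (a * c %% p); first by rewrite ltn_mod.
rewrite /dvdn -modnDml modnMmr modnDml -/(dvdn _ _).
by rewrite (_ : q * (a * c) + c = c * (1 + a * q)) ?dvdn_mull //; lia.
Qed.

Lemma coprime_mul_mod_inj s q u v : coprime s q -> u < s -> v < s ->
  q * u = q * v %[mod s] -> u = v.
Proof.
move=> co us vs; wlog uv : u v us vs / u <= v => [hw|].
  by case: (leqP u v) => [|/ltnW] h E; [|symmetry]; apply: hw.
move/eqP; rewrite eq_sym eqn_mod_dvd ?leq_mul2l ?uv ?orbT // -mulnBr Gauss_dvdr //.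
by case: (posnP (v - u)) => [|p /(dvdn_leq p)]; lia.
Qed.

Lemma eq1_solvable_evenE s t : 0 < s ->
  eq1_solvable (2 * s) (2 * t + 1) <-> exists x y, 2 * s * x + (2 * t + 1) * y = (2 * s - 1) * t.
Proof. by move=> s0; apply: eq1_solvable_half; nia. Qed.

Lemma eq1_solvable_even_excl s t : 0 < s -> coprime s (2 * t + 1) ->
  eq1_solvable (2 * s) (2 * t + 1) -> ~ eq1_solvable (2 * s) (2 * (t + s) + 1).
Proof.
(* Both equations force (2t+1) y = -t (mod s), hence the same y < s; comparing them
   then leaves s (2 (x' + y) + 1) = 2 s (s + x), a parity clash. *)
move=> s0 co /(eq1_solvable_evenE _ _ s0) [x [y E]] /(eq1_solvable_evenE _ _ s0) [x' [y' E']].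
have ys : y < s by nia.
have y's : y' < s by nia.
have Ey : (2 * t + 1) * y + t = 0 %[mod s].
  by rewrite -(modnMDl (2 * x)) (_ : _ + _ = 2 * t * s) ?modnMl ?mod0n //; nia.
have Ey' : (2 * t + 1) * y' + t = 0 %[mod s].
  by rewrite -(modnMDl (2 * (x' + y') + 1)) (_ : _ + _ = 2 * (t + s) * s) ?modnMl ?mod0n //; nia.
have yy' : y = y'.
  by apply: coprime_mul_mod_inj co ys y's _; apply/eqP; rewrite -(eqn_modDr t) Ey Ey'.
subst y'; have : s * (2 * (x' + y) + 1) = s * (2 * s + 2 * x) by nia.
by move/eqP; rewrite eqn_pmul2l //; lia.
Qed.

Lemma eq1_solvable_even_cover s t : 0 < s -> coprime (2 * s) (2 * t + 1) ->
  eq1_solvable (2 * s) (2 * t + 1) \/ eq1_solvable (2 * s) (2 * (t + s) + 1).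
Proof.
move=> s0 co; rewrite !eq1_solvable_evenE //.
have s2 : 0 < 2 * s by rewrite muln_gt0.
(* With (2t+1) y = -t (mod 2s) and y < 2s, the first equation is solved with this y
   when y < s, the second one with y - s otherwise. *)
have [y ys /dvdnP [M EM]] := coprime_linear_congruence _ _ t s2 co; clear co.
case: (ltnP y s) => ys'.
- left; have : M <= t by nia.
  by exists (t - M), y; nia.
- right; have [w yw] : exists w, y = s + w by exists (y - s); lia.
  subst y; have [x Ex] : exists x, M + w + x = 2 * t + s.
    by exists (2 * t + s - (M + w)); nia.
  by exists x, w; have := congr1 (muln (2 * s)) Ex; nia.
Qed.

Lemma eq1_solvable_addr_even m r : ~~ odd m -> 0 < m -> coprime m r ->
  eq1_solvable m (r + m) <-> ~ eq1_solvable m r.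
Proof.
move=> em m0 co; have : coprime 2 r by apply: coprime_dvdl co; rewrite dvdn2.
rewrite coprime2n => or; move: co m0.
have [s ->] : exists s, m = 2 * s by exists m./2; lia.
have [t ->] : exists t, r = 2 * t + 1 by exists r./2; lia.
rewrite (_ : 2 * t + 1 + 2 * s = 2 * (t + s) + 1); last by lia.
rewrite muln_gt0 => co s0; split=> [E2 E1 | NE1].
- by apply: eq1_solvable_even_excl s0 _ E1 E2; apply: coprime_dvdl co; apply: dvdn_mull.
- by case: (eq1_solvable_even_cover _ _ s0 co).
Qed.

Lemma Gamma_sym a b : Gamma a b = Gamma b a.
Proof.
rewrite /Gamma gcdnC; move: (eq1_solvable_sym (a %/ gcdn b a) (b %/ gcdn b a)).
by do 2 case: excluded_middle_informative => ? /=; first [done | tauto].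
Qed.

Lemma Gamma_1or2 a b : Gamma a b = 1 \/ Gamma a b = 2.
Proof. by rewrite /Gamma; case: excluded_middle_informative; [left | right]. Qed.

Lemma Gamma_congr a b c d : coprime a b -> coprime c d ->
  (eq1_solvable a b <-> eq1_solvable c d) -> Gamma a b = Gamma c d.
Proof.
rewrite /Gamma => /eqP -> /eqP -> E; rewrite !divn1.
by do 2 case: excluded_middle_informative => ? /=; first [done | tauto].
Qed.

Lemma Gamma_flip a b c d : coprime a b -> coprime c d ->
  (eq1_solvable a b <-> ~ eq1_solvable c d) -> Gamma a b = 3 - Gamma c d.
Proof.
rewrite /Gamma => /eqP -> /eqP -> E; rewrite !divn1.
by do 2 case: excluded_middle_informative => ? /=; first [done | tauto].
Qed.

Lemma coprime_addMr q p k : coprime q (p + k * q) = coprime q p.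
Proof. by rewrite -coprime_modr addnC modnMDl coprime_modr. Qed.

Lemma Gamma_addr q p : 0 < q -> 0 < p -> coprime q p ->
  Gamma q (p + q) = if odd q then Gamma q p else 3 - Gamma q p.
Proof.
move=> q0 p0 co; have co' : coprime q (p + q) by rewrite -{2}(mul1n q) coprime_addMr.
case: ifP => oq.
- by apply: Gamma_congr => //; apply: eq1_solvable_addr_odd.
- by apply: Gamma_flip => //; apply: eq1_solvable_addr_even; rewrite ?oq.
Qed.

Lemma Gamma_addMr q p k : 0 < q -> 0 < p -> coprime q p ->
  Gamma q (p + k * q) = if odd k && ~~ odd q then 3 - Gamma q p else Gamma q p.
Proof.
move=> q0 p0 co; elim: k => [|k IH]; first by rewrite addn0.
rewrite mulSnr addnA Gamma_addr ?coprime_addMr ?addn_gt0 ?p0 // IH oddS.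
by case: (odd q) (odd k) (Gamma_1or2 q p) => -[] [] ->.
Qed.

Lemma Gamma_mulDr p q k : 0 < p -> 0 < q -> coprime p q ->
  Gamma q (k * q + p) = if odd k && ~~ odd q then 3 - Gamma p q else Gamma p q.
Proof.
by move=> p0 q0 co; rewrite addnC Gamma_addMr 1?coprime_sym // Gamma_sym.
Qed.

Lemma aseq_rec k a b n : 0 < n -> aseq k a b n.+2 = k * aseq k a b n.+1 + aseq k a b n.
Proof. by case: n => // n _; rewrite /aseq /=; case: rec_pair. Qed.

Lemma aseq_gt0_coprime k a b n : 0 < a -> 0 < b -> coprime a b -> 0 < n ->
  [/\ 0 < aseq k a b n, 0 < aseq k a b n.+1 & coprime (aseq k a b n) (aseq k a b n.+1)].
Proof.
move=> a0 b0 co; elim: n => [|[|n] IH] // _; have [//|p0 q0 cop] := IH.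
rewrite (aseq_rec k a b n.+1) //; split=> //; first by rewrite addn_gt0 p0 orbT.
by rewrite addnC coprime_addMr coprime_sym.
Qed.

Lemma Gamma_aseq_step k a b n : 0 < a -> 0 < b -> coprime a b -> 0 < n ->
  Gamma (aseq k a b n.+1) (aseq k a b n.+2) =
  if odd k && ~~ odd (aseq k a b n.+1) then 3 - Gamma (aseq k a b n) (aseq k a b n.+1)
  else Gamma (aseq k a b n) (aseq k a b n.+1).
Proof.
move=> a0 b0 co n0; have [p0 q0 cop] := aseq_gt0_coprime k a b n a0 b0 co n0.
by rewrite aseq_rec // Gamma_mulDr.
Qed.

Lemma odd_aseq_period3 k a b n : odd k -> 0 < n -> odd (aseq k a b n.+3) = odd (aseq k a b n).
Proof.
move=> ok n0; rewrite !aseq_rec // !(oddD, oddM) ok /=.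
by case: (odd (aseq k a b n)); case: (odd (aseq k a b n.+1)).
Qed.

Lemma even_aseq_period3 k a b m : odd k -> 0 < m ->
  ~~ odd (aseq k a b m) -> odd (aseq k a b m.+1) ->
  forall i, ~~ odd (aseq k a b (m + i)) = (i %% 3 == 0).
Proof.
move=> ok m0 e0 e1.
have e2 : odd (aseq k a b m.+2) by rewrite aseq_rec // oddD oddM ok e1 (negbTE e0).
elim/ltn_ind=> -[|[|[|i]]] IH; rewrite ?addn0 ?addn1 ?addn2 ?e0 ?e1 ?e2 //.
by rewrite !addnS odd_aseq_period3 ?addn_gt0 ?m0 // IH //; lia.
Qed.

Lemma odd_divn3S j : 0 < j -> odd (j %/ 3) = (j %% 3 == 0) (+) odd (j.-1 %/ 3).
Proof.
move=> j0; case: eqP => h /=.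
- by rewrite (_ : j %/ 3 = (j.-1 %/ 3).+1) ?oddS //; lia.
- by rewrite (_ : j %/ 3 = j.-1 %/ 3) //; lia.
Qed.

Lemma xseqS j : 0 < j -> xseq j.+1 = if j %% 3 == 0 then 3 - xseq j else xseq j.
Proof. by move=> j0; rewrite /xseq !subn1 /= odd_divn3S //; case: (_ == 0); case: odd. Qed.

Lemma yseqS j : 0 < j -> yseq j.+1 = if j %% 3 == 0 then 3 - yseq j else yseq j.
Proof. by move=> j0; rewrite /yseq !subn1 /= odd_divn3S //; case: (_ == 0); case: odd. Qed.

Lemma eq_xseq_or_yseq (G : nat -> nat) : G 1 = 1 \/ G 1 = 2 ->
  (forall j, 0 < j -> G j.+1 = if j %% 3 == 0 then 3 - G j else G j) ->
  (forall j, 0 < j -> G j = xseq j) \/ (forall j, 0 < j -> G j = yseq j).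
Proof.
move=> [G1 | G1] GS; [left | right]; elim=> [//|[_ _ //|j IH _]].
- by rewrite GS // xseqS // IH.
- by rewrite GS // yseqS // IH.
Qed.

Lemma gseq_from_even_odd k a b m : 0 < a -> 0 < b -> coprime a b -> odd k -> 0 < m ->
  ~~ odd (aseq k a b m) -> odd (aseq k a b m.+1) ->
  gseq_from k a b m xseq \/ gseq_from k a b m yseq.
Proof.
move=> a0 b0 co ok m0 e0 e1.
apply: (eq_xseq_or_yseq (fun j => Gamma (aseq k a b (m + j - 1)) (aseq k a b (m + j)))).
  exact: Gamma_1or2.
move=> j j0; have [n mjn] : exists n, m + j = n.+1 by exists (m + j).-1; lia.
rewrite addnS mjn !subn1 /= Gamma_aseq_step // ?ok -?mjn ?even_aseq_period3 //; lia.
Qed.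

Theorem theorem5p2 (a b k : nat) :
  0 < a -> 0 < b -> 0 < k -> coprime a b ->
  (~~ odd k -> exists c, forall n, 1 <= n ->
       Gamma (aseq k a b n) (aseq k a b n.+1) = c) /\
  (odd k ->
     (odd a -> odd b -> gseq_from k a b 3 xseq \/ gseq_from k a b 3 yseq) /\
     (odd a -> ~~ odd b -> gseq_from k a b 2 xseq \/ gseq_from k a b 2 yseq) /\
     (~~ odd a -> odd b -> gseq_from k a b 1 xseq \/ gseq_from k a b 1 yseq)).
Proof.
move=> a0 b0 _ co; split=> [ek | ok].
  exists (Gamma (aseq k a b 1) (aseq k a b 2)).
  by elim=> [//|[//|n] IH] _; rewrite Gamma_aseq_step // (negbTE ek) IH.
have a3 : aseq k a b 3 = k * b + a by rewrite aseq_rec.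
have a4 : aseq k a b 4 = k * (k * b + a) + b by rewrite aseq_rec // a3.
split; [|split] => oa ob; apply: gseq_from_even_odd => //;
  rewrite ?a3 ?a4 /= !(oddD, oddM) ok; by move: oa ob; case: (odd a); case: (odd b).
Qed.
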